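(* Let $\rho$ and $\sigma$ be positive definite density matrices on a $d$-dimensional complex Hilbert space, and let $\alpha>1$. Define the R\'enyi relative entropy $D_\alpha(\rho\|\sigma)=\frac{1}{\alpha-1}\log\mathrm{tr}\,[\rho^\alpha\sigma^{1-\alpha}]$. Then \[ D_\alpha(\rho\|\sigma)\ \ge\ \frac{1}{\alpha-1}\Big(\log d+\frac{\alpha}{d}\log\det(\rho)+\frac{1-\alpha}{d}\log\det(\sigma)\Big). \]
   Context: A density matrix is a Hermitian positive semidefinite matrix with trace $1$. Real powers of positive definite matrices are defined by functional calculus. $\log$ denotes the logarithm to a fixed base greater than $1$. *)

From HB Require Import structures.
From mathcomp Require Import all_boot all_order all_algebra.
From mathcomp Require Import complex.
From mathcomp Require Import boolp reals exp.
Set Implicit Arguments.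
Unset Strict Implicit.
Unset Printing Implicit Defensive.
Import Order.TTheory GRing.Theory Num.Theory.
Local Open Scope ring_scope.
Local Open Scope sesquilinear_scope.

Section QDefs.
Variable R : realType.
Local Notation C := R[i].

Definition adjmx (m n : nat) (A : 'M[C]_(m, n)) : 'M[C]_(n, m) := A ^t*.

Definition hermitian (d : nat) (A : 'M[C]_d) : Prop := adjmx A = A.

(* positive definite: Hermitian and <v, A v> > 0 for every nonzero v
   (here with row vectors: v A v^* ; 0 < z in C means z real and > 0) *)
Definition posdef (d : nat) (A : 'M[C]_d) : Prop :=
  hermitian A /\ forall v : 'rV[C]_d, v != 0 -> 0 < (v *m A *m adjmx v) 0 0.

Definition posdef_density (d : nat) (A : 'M[C]_d) : Prop :=
  posdef A /\ \tr A = 1.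

Definition pos_spectral_decomp (d : nat) (A : 'M[C]_d)
    (U : 'M[C]_d) (l : 'rV[R]_d) : Prop :=
  U \is unitarymx /\ (forall i, 0 < l 0 i) /\
  A = adjmx U *m diag_mx (\row_i ((l 0 i)%:C)%C) *m U.

(* real power A^t of a positive definite matrix, by functional calculus:
   A^t = U^* diag(l_i^t) U for a spectral decomposition of A
   (independent of the chosen decomposition); 0 if A has none. *)
Definition mpow (d : nat) (A : 'M[C]_d) (t : R) : 'M[C]_d :=
  match pselect (exists p : 'M[C]_d * 'rV[R]_d, pos_spectral_decomp A p.1 p.2) with
  | left h => let p := projT1 (cid h) in
              adjmx p.1 *m diag_mx (\row_i ((powR (p.2 0 i) t)%:C)%C) *m p.1
  | right _ => 0
  end.

Definition logb (b x : R) : R := ln x / ln b.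

(* Renyi relative entropy D_alpha(rho || sigma) = 1/(alpha-1) log tr[rho^alpha sigma^(1-alpha)];
   the trace is real (positive) for positive definite rho, sigma, we take its real part *)
Definition renyi_D (b alpha : R) (d : nat) (rho sigma : 'M[C]_d) : R :=
  (alpha - 1)^-1 *
    logb b (complex.Re (\tr (mpow rho alpha *m mpow sigma (1 - alpha)))).

End QDefs.

From HB Require Import structures.
From mathcomp Require Import all_boot all_order all_algebra.
From mathcomp Require Import complex.
From mathcomp Require Import boolp reals exp.
From mathcomp Require Import ring.
Set Implicit Arguments.
Unset Strict Implicit.
Unset Printing Implicit Defensive.
Import Order.TTheory GRing.Theory Num.Theory.
Local Open Scope ring_scope.

(* Write rho = U^* diag(l) U and sigma = V^* diag(m) V with U, V unitary.
   With W = U V^*, the trace tr[rho^alpha sigma^(1-alpha)] equals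
   sum_ij l_i^alpha m_j^(1-alpha) |W_ij|^2, and (|W_ij|^2) is doubly stochastic
   since W is unitary.  Hence the |W_ij|^2 / d are probability weights on pairs
   (i, j), and Jensen's inequality for the concave logarithm bounds the log of
   the trace from below by log d plus the weighted mean of
   log (l_i^alpha m_j^(1-alpha)), which is
   (alpha log det rho + (1 - alpha) log det sigma) / d. *)

Section LogInequalities.
Variable R : realType.

Lemma ln_le_subr1 (y : R) : 0 < y -> ln y <= y - 1.
Proof.
move=> y_gt0; have := @le_ln1Dx R (y - 1).
by rewrite [1 + _]addrC subrK; apply; rewrite ltrBrDl subrr.
Qed.

Lemma ln_prod (I : Type) (s : seq I) (f : I -> R) : (forall i, 0 < f i) ->
  ln (\prod_(i <- s) f i) = \sum_(i <- s) ln (f i).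
Proof.
move=> f_gt0; elim: s => [|i s IHs]; first by rewrite !big_nil ln1.
by rewrite !big_cons lnM ?IHs // posrE // prodr_gt0.
Qed.

(* Jensen via the tangent line [ln y <= y - 1], applied to [y = x k / S]. *)
Lemma concave_ln_sum (I : finType) (w x : I -> R) :
  (forall k, 0 <= w k) -> \sum_k w k = 1 -> (forall k, 0 < x k) ->
  \sum_k w k * ln (x k) <= ln (\sum_k w k * x k).
Proof.
move=> w_ge0 w_sum1 x_gt0; set S := \sum_k w k * x k.
have S_gt0 : 0 < S.
  have /hasP[k _ wk_gt0] : has (fun k => true && (0 < w k)) (index_enum I).
    by rewrite -psumr_neq0 // w_sum1 oner_neq0.
  rewrite /S (bigD1 k) //= ltr_wpDr ?sumr_ge0 // => [j _|].
    by rewrite mulr_ge0 // ltW.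
  exact: mulr_gt0.
have tangent : \sum_k w k * (ln (x k) - ln S) <= \sum_k w k * (x k / S - 1).
  apply: ler_sum => k _; apply: ler_wpM2l => //.
  by rewrite -ln_div ?posrE // ln_le_subr1 // divr_gt0.
have tangentE : \sum_k w k * (x k / S - 1) = S / S - \sum_k w k.
  by rewrite {1}/S mulr_suml -sumrB; apply: eq_bigr => k _; ring.
have mean_lnE : \sum_k w k * (ln (x k) - ln S)
    = \sum_k w k * ln (x k) - (\sum_k w k) * ln S.
  by rewrite mulr_suml -sumrB; apply: eq_bigr => k _; ring.
move: tangent; rewrite tangentE mean_lnE w_sum1 divff ?gt_eqF //.
by rewrite mul1r subrr subr_le0.
Qed.

Definition doubly_stochastic (d : nat) (P : 'M[R]_d) : Prop :=
  [/\ forall i j, 0 <= P i j, forall i, \sum_j P i j = 1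
    & forall j, \sum_i P i j = 1].

Lemma ln_doubly_stochastic_form d (P : 'M[R]_d) (a b : 'I_d -> R) :
  (0 < d)%N -> doubly_stochastic P ->
  (forall i, 0 < a i) -> (forall j, 0 < b j) ->
  ln d%:R + (\sum_i ln (a i) + \sum_j ln (b j)) / d%:R
    <= ln (\sum_i \sum_j a i * b j * P i j).
Proof.
move=> d_gt0 [P_ge0 P_row P_col] a_gt0 b_gt0.
have d_neq0 : d%:R != 0 :> R by rewrite pnatr_eq0 -lt0n.
(* Jensen with the weights [P i j / d] at the points [d * a i * b j]. *)
pose w (k : 'I_d * 'I_d) := P k.1 k.2 / d%:R.
pose x (k : 'I_d * 'I_d) := d%:R * (a k.1 * b k.2).
have w_sum1 : \sum_k w k = 1.
  rewrite -(pair_bigA _ (fun i j => P i j / d%:R)) /=.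
  under eq_bigr do rewrite -mulr_suml P_row.
  by rewrite -mulr_suml sumr_const card_ord mulfV.
have wxE : \sum_k w k * x k = \sum_i \sum_j a i * b j * P i j.
  by rewrite pair_bigA; apply: eq_bigr => -[i j] _; rewrite /w /x /=; field.
have wlnxE : \sum_k w k * ln (x k)
    = ln d%:R + (\sum_i ln (a i) + \sum_j ln (b j)) / d%:R.
  transitivity (\sum_k (ln d%:R * w k
      + (ln (a k.1) * P k.1 k.2 + ln (b k.2) * P k.1 k.2) / d%:R)).
    apply: eq_bigr => -[i j] _.
    by rewrite /w /x /= !lnM ?posrE ?mulr_gt0 ?ltr0n //; field.
  rewrite big_split /= -mulr_sumr w_sum1 mulr1 -mulr_suml big_split /=.
  rewrite -(pair_bigA _ (fun i j => ln (a i) * P i j)).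
  rewrite -(pair_bigA _ (fun i j => ln (b j) * P i j)) /=.
  congr (_ + (_ + _) / _).
    by apply: eq_bigr => i _; rewrite -mulr_sumr P_row mulr1.
  by rewrite exchange_big; apply: eq_bigr => j _; rewrite -mulr_sumr P_col mulr1.
rewrite -wxE -wlnxE; apply: concave_ln_sum => // [[i j]|[i j]].
  by rewrite divr_ge0.
by rewrite !mulr_gt0 ?ltr0n.
Qed.

Lemma logb_doubly_stochastic_form (b s t : R) d (P : 'M[R]_d) (x y : 'I_d -> R) :
  1 < b -> (0 < d)%N -> doubly_stochastic P ->
  (forall i, 0 < x i) -> (forall j, 0 < y j) ->
  logb b d%:R + s / d%:R * logb b (\prod_i x i)
      + t / d%:R * logb b (\prod_j y j)
    <= logb b (\sum_i \sum_j powR (x i) s * powR (y j) t * P i j).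
Proof.
move=> b_gt1 d_gt0 P_ds x_gt0 y_gt0.
have logbE : logb b d%:R + s / d%:R * logb b (\prod_i x i)
      + t / d%:R * logb b (\prod_j y j)
    = (ln d%:R + (s * \sum_i ln (x i) + t * \sum_j ln (y j)) / d%:R) / ln b.
  by rewrite /logb !ln_prod //; ring.
rewrite logbE /logb ler_pM2r ?invr_gt0 ?ln_gt0 //.
apply: le_trans (ln_doubly_stochastic_form d_gt0 P_ds
  (fun i => powR_gt0 s (x_gt0 i)) (fun j => powR_gt0 t (y_gt0 j))).
have sum_ln_powR (z : 'I_d -> R) r : \sum_i ln (z i `^ r) = r * \sum_i ln (z i).
  by rewrite mulr_sumr; apply: eq_bigr => i _; rewrite ln_powR.
by rewrite !sum_ln_powR.
Qed.

End LogInequalities.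

Lemma mxtrace1_dim_gt0 (F : nzRingType) d (A : 'M[F]_d) :
  \tr A = 1 -> (0 < d)%N.
Proof.
by case: d A => // A; rewrite /mxtrace big_ord0 => /esym/eqP; rewrite oner_eq0.
Qed.

Section PositiveDefiniteMatrices.
Variable R : realType.
Local Notation C := R[i].
Local Open Scope sesquilinear_scope.

Lemma adjmxM m n p (A : 'M[C]_(m, n)) (B : 'M[C]_(n, p)) :
  adjmx (A *m B) = adjmx B *m adjmx A.
Proof. by rewrite /adjmx trmx_mul map_mxM. Qed.

Lemma adjmx_delta n (i : 'I_n) : adjmx (delta_mx 0 i : 'rV[C]_n) = delta_mx i 0.
Proof. by rewrite /adjmx trmx_delta map_delta_mx. Qed.

Lemma posdef_normalmx d (A : 'M[C]_d) : posdef A -> A \is normalmx.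
Proof. by case=> A_herm _; rewrite qualifE -[A^t*]/(adjmx A) A_herm. Qed.

Lemma unitary_conjK d (U : 'M[C]_d) (D : 'M[C]_d) :
  U \is unitarymx -> U *m (U^t* *m D *m U) *m U^t* = D.
Proof.
move=> /unitarymxP UU.
by rewrite !mulmxA UU mul1mx -mulmxA UU mulmx1.
Qed.

Lemma posdef_spectral_decomp d (A : 'M[C]_d) :
  posdef A -> exists U l, pos_spectral_decomp A U l.
Proof.
move=> A_posdef; have [_ A_pos] := A_posdef.
have := orthomx_spectralP (posdef_normalmx A_posdef).
set U := spectralmx A; set sp := spectral_diag A.
have U_unitary : U \is unitarymx by apply: spectral_unitarymx.
rewrite invmx_unitary // => AE.
(* [sp 0 i] is the quadratic form of [A] at the i-th row of [U]. *)
have sp_gt0 i : 0 < sp 0 i.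
  pose e_i : 'rV[C]_d := delta_mx 0 i.
  have e_iU_neq0 : e_i *m U != 0.
    rewrite mulmx_free_eq0 ?row_free_unit ?unitarymx_unit //.
    apply/eqP => /matrixP /(_ 0 i) /eqP.
    by rewrite !mxE !eqxx oner_eq0.
  have := A_pos _ e_iU_neq0.
  have -> : e_i *m U *m A *m adjmx (e_i *m U)
      = e_i *m (U *m A *m U^t*) *m delta_mx i 0.
    by rewrite adjmxM adjmx_delta !mulmxA.
  by rewrite AE unitary_conjK // -rowE -colE !mxE eqxx mulr1n.
exists U, (\row_i complex.Re (sp 0 i)); split => //; split => [i|].
  by rewrite mxE; have := sp_gt0 i; rewrite ltcE => /andP[].
rewrite {1}AE; congr (_ *m diag_mx _ *m _); apply/rowP => i.
by rewrite !mxE RRe_real // gtr0_real.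
Qed.

Lemma posdef_mpowE d (A : 'M[C]_d) t : posdef A -> exists U l,
  pos_spectral_decomp A U l /\
  mpow A t = adjmx U *m diag_mx (\row_i (powR (l 0 i) t)%:C%C) *m U.
Proof.
rewrite /mpow => A_posdef; case: pselect => [decomp|no_decomp].
  by case: (cid decomp) => -[U l] /= ?; exists U, l.
have [U [l ?]] := posdef_spectral_decomp A_posdef.
by case: no_decomp; exists (U, l).
Qed.

Lemma pos_spectral_decomp_det d (A U : 'M[C]_d) l :
  pos_spectral_decomp A U l -> complex.Re (\det A) = \prod_i l 0 i.
Proof.
case=> U_unitary [_ ->].
have UU : adjmx U *m U = 1%:M.
  by rewrite -[U in _ *m U]trmxCK; apply/unitarymxP; rewrite /adjmx trmxC_unitary.
rewrite !det_mulmx mulrAC -det_mulmx UU det1 mul1r det_diag.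
by rewrite (eq_bigr (fun i => (l 0 i)%:C%C)) -?rmorph_prod // => i _; rewrite mxE.
Qed.

Definition sqr_modulus_mx m n (W : 'M[C]_(m, n)) : 'M[R]_(m, n) :=
  \matrix_(i, j) complex.Re (W i j * (W i j)^*).

Lemma unitary_doubly_stochastic d (W : 'M[C]_d) :
  W \is unitarymx -> doubly_stochastic (sqr_modulus_mx W).
Proof.
move=> W_unitary; have W'_unitary : W^t* \is unitarymx by rewrite trmxC_unitary.
split=> [i j|i|j].
- by rewrite mxE; have := mul_conjC_ge0 (W i j); rewrite lecE => /andP[].
- have /unitarymxP /matrixP /(_ i i) := W_unitary.
  rewrite !mxE eqxx mulr1n => /(congr1 (@complex.Re R)) /= <-.
  by rewrite raddf_sum; apply: eq_bigr => j _; rewrite !mxE.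
- have /unitarymxP /matrixP /(_ j j) := W'_unitary.
  rewrite trmxCK !mxE eqxx mulr1n => /(congr1 (@complex.Re R)) /= <-.
  by rewrite raddf_sum; apply: eq_bigr => i _; rewrite !mxE mulrC.
Qed.

Lemma trace_spectral_mul d (U V : 'M[C]_d) (a b : 'I_d -> R) :
  complex.Re (\tr ((adjmx U *m diag_mx (\row_i (a i)%:C%C) *m U)
                   *m (adjmx V *m diag_mx (\row_j (b j)%:C%C) *m V)))
  = \sum_i \sum_j a i * b j * sqr_modulus_mx (U *m adjmx V) i j.
Proof.
set W := U *m adjmx V.
have adjW : V *m adjmx U = adjmx W by rewrite /W adjmxM /adjmx trmxCK.
rewrite -mulmxA mxtrace_mulC !mulmxA -[_ *m V *m adjmx U]mulmxA adjW -/W.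
clearbody W; rewrite /mxtrace raddf_sum; apply: eq_bigr => i _.
rewrite mul_mx_diag !mxE mulr_suml raddf_sum; apply: eq_bigr => j _.
rewrite mul_mx_diag !mxE.
have -> : W i j * (b j)%:C%C * (W i j)^* * (a i)%:C%C
    = (a i * b j)%:C%C * (W i j * (W i j)^*) by rewrite rmorphM; ring.
by case: (W i j * _) => x y /=; ring.
Qed.

End PositiveDefiniteMatrices.

Theorem mainTheorem5 (R : realType) (b : R) (hb : 1 < b) (d : nat)
  (rho sigma : 'M[R[i]]_d) (alpha : R) :
  posdef_density rho -> posdef_density sigma -> 1 < alpha ->
  renyi_D b alpha rho sigma >=
    (alpha - 1)^-1 *
      (logb b d%:R
       + alpha / d%:R * logb b (complex.Re (\det rho))
       + (1 - alpha) / d%:R * logb b (complex.Re (\det sigma))).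
Proof.
move=> [rho_posdef rho_tr1] [sigma_posdef _] alpha_gt1; rewrite /renyi_D.
have [U [l [rho_decomp ->]]] := posdef_mpowE alpha rho_posdef.
have [V [m [sigma_decomp ->]]] := posdef_mpowE (1 - alpha) sigma_posdef.
have [U_unitary [l_gt0 _]] := rho_decomp.
have [V_unitary [m_gt0 _]] := sigma_decomp.
rewrite trace_spectral_mul.
rewrite (pos_spectral_decomp_det rho_decomp) (pos_spectral_decomp_det sigma_decomp).
apply: ler_wpM2l; first by rewrite invr_ge0 subr_ge0 ltW.
apply: logb_doubly_stochastic_form (mxtrace1_dim_gt0 rho_tr1) _ l_gt0 m_gt0 => //.
by apply/unitary_doubly_stochastic/mul_unitarymx; rewrite // /adjmx trmxC_unitary.
Qed.
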